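(* For an ideal $\mathcal{I}$ on $\omega$, the following are equivalent: (1) Player I has a winning strategy in the HMM game with respect to $\mathcal{I}$; (2) Player II has a winning strategy in the tallness game with respect to $\mathcal{I}$; (3) $\mathcal{ED}_{\mathrm{fin}}\le_{\mathrm{KB}}\mathcal{I}$.
   Context: Ideals on $\omega$ are assumed to contain all finite sets. $\mathcal{ED}$ is the ideal on $\omega\times\omega$ generated by the vertical lines $\{n\}\times\omega$ and the graphs of functions from $\omega$ to $\omega$. $\Delta=\{(m,n)\in\omega^2: n\le m\}$ and $\mathcal{ED}_{\mathrm{fin}}=\{A\cap\Delta: A\in\mathcal{ED}\}$, an ideal on the countable set $\Delta$. For ideals $\mathcal{J}$ on $X$ and $\mathcal{I}$ on $Y$, $\mathcal{J}\le_{\mathrm{KB}}\mathcal{I}$ means there is a finite-to-one $f:Y\to X$ with $f^{-1}(J)\in\mathcal{I}$ for every $J\in\mathcal{J}$. Tallness game with respect to $\mathcal{I}$: at round $k$, Player I plays $n_k\in\omega$ with $n_0<n_1<\cdots$, then Player II plays $i_k\in\{0,1\}$; Player II wins iff $\{n_k: i_k=1\}$ is infinite and belongs to $\mathcal{I}$. HMM game with respect to $\mathcal{I}$: at round $k$, Player I plays a finite set $F_k\subseteq\omega$, then Player II plays $n_k\in\omega\setminus F_k$; Player I wins iff $\{n_k:k\in\omega\}\in\mathcal{I}$. *)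

From Stdlib Require Import List Arith.
Import ListNotations.

Definition finite_nat (A : nat -> Prop) : Prop :=
  exists N, forall n, A n -> n < N.

Definition infinite_nat (A : nat -> Prop) : Prop :=
  forall N, exists m, N <= m /\ A m.

Definition is_ideal (I : (nat -> Prop) -> Prop) : Prop :=
  (forall A B : nat -> Prop, I B -> (forall n, A n -> B n) -> I A) /\
  (forall A B : nat -> Prop, I A -> I B -> I (fun n => A n \/ B n)) /\
  (forall A : nat -> Prop, finite_nat A -> I A) /\
  ~ I (fun _ => True).

(* ED: the ideal on omega x omega generated by the vertical lines {n} x omega
   and the graphs of functions omega -> omega, i.e. the sets covered by
   finitely many vertical lines and finitely many graphs. *)
Definition ED (A : nat * nat -> Prop) : Prop :=
  exists (N : nat) (fs : list (nat -> nat)),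
    forall p q, A (p, q) -> p < N \/ exists f, In f fs /\ q = f p.

Definition Delta : Type := { p : nat * nat | snd p <= fst p }.

Definition ED_fin (J : Delta -> Prop) : Prop :=
  exists A : nat * nat -> Prop, ED A /\ forall d : Delta, J d <-> A (proj1_sig d).

Definition KB_le {X : Type} (J : (X -> Prop) -> Prop) (I : (nat -> Prop) -> Prop) : Prop :=
  exists f : nat -> X,
    (forall x : X, finite_nat (fun n => f n = x)) /\
    (forall B : X -> Prop, J B -> I (fun n => B (f n))).

Definition prefix (s : nat -> nat) (k : nat) : list nat := map s (seq 0 k).

(* Tallness game. A strategy for Player II maps the moves n_0,...,n_k of
   Player I made so far to i_k (true = 1). *)
Definition tall_strategy_II := list nat -> bool.

Definition strictly_increasing (s : nat -> nat) : Prop :=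
  forall k, s k < s (S k).

Definition II_wins_tallness (I : (nat -> Prop) -> Prop) (sigma : tall_strategy_II) : Prop :=
  forall s : nat -> nat, strictly_increasing s ->
    let W := fun m => exists k, s k = m /\ sigma (prefix s (S k)) = true in
    infinite_nat W /\ I W.

(* HMM game. A strategy for Player I maps the moves n_0,...,n_{k-1} of
   Player II so far to a finite set F_k (given as a list). *)
Definition hmm_strategy_I := list nat -> list nat.

Definition I_wins_HMM (I : (nat -> Prop) -> Prop) (sigma : hmm_strategy_I) : Prop :=
  forall s : nat -> nat, (forall k, ~ In (s k) (sigma (prefix s k))) ->
    I (fun m => exists k, s k = m).

(* We prove the cycle (3) -> (2) -> (1) -> (3).
   (3) -> (2): given a finite-to-one reduction f : omega -> Delta, Player II
     answers 1 exactly when the column of f(n_k) has not occurred before.  The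
     answered set has pairwise distinct columns, so its f-image lies in the
     graph of a function (hence in ED), and since f is finite-to-one columns
     go to infinity, so new columns appear infinitely often.
   (2) -> (1): Player I keeps a virtual tallness play h.  From any h, all but
     finitely many x can be reached by a continuation J ++ [x] after which
     Player II answers 1 (otherwise the bad x's would form a play defeating
     II).  Player I forbids the finitely many exceptions; the virtual plays
     form a chain whose limit is a tallness play answering 1 on every move.
   (1) -> (3): from Player I's strategy we build fast-growing milestones and
     send n in the i-th block to (milestone (i+1), n).  A graph of a function
     meets each block at most once, and its traces on even and on odd blocks
     are legal HMM plays, hence in I. *)
From Stdlib Require Import List Arith Bool Lia ClassicalEpsilon Classical.
Import ListNotations.

Section IdealFacts.
Variable I : (nat -> Prop) -> Prop.
Hypothesis HI : is_ideal I.

Lemma ideal_mono : forall A B : nat -> Prop, I B -> (forall n, A n -> B n) -> I A.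
Proof. destruct HI as [H _]; exact H. Qed.

Lemma ideal_union : forall A B : nat -> Prop, I A -> I B -> I (fun n => A n \/ B n).
Proof. destruct HI as [_ [H _]]; exact H. Qed.

Lemma ideal_finite : forall A : nat -> Prop, finite_nat A -> I A.
Proof. destruct HI as [_ [_ [H _]]]; exact H. Qed.

End IdealFacts.

Lemma prefix_S : forall s k, prefix s (S k) = prefix s k ++ [s k].
Proof. intros. unfold prefix. rewrite seq_S, map_app. reflexivity. Qed.

Lemma prefix_length : forall s k, length (prefix s k) = k.
Proof. intros. unfold prefix. rewrite length_map, length_seq. reflexivity. Qed.

Lemma in_prefix : forall s k x, In x (prefix s k) -> exists j, j < k /\ s j = x.
Proof.
  intros s k x H. unfold prefix in H. apply in_map_iff in H.
  destruct H as [j [Hj Hin]]. apply in_seq in Hin. exists j. split; [lia | auto].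
Qed.

Lemma prefix_nth : forall s m i d, i < m -> nth i (prefix s m) d = s i.
Proof.
  intros. unfold prefix. rewrite (nth_indep _ d (s 0)), map_nth, seq_nth; auto.
  rewrite length_map, length_seq; auto.
Qed.

Lemma strictly_increasing_ge_id : forall s, strictly_increasing s -> forall k, k <= s k.
Proof. intros s Hs k. induction k; [lia |]. specialize (Hs k). lia. Qed.

Lemma list_max_upper : forall l x, In x l -> x <= list_max l.
Proof.
  intros l x H. pose proof (proj1 (list_max_le l _) (le_n _)) as F.
  rewrite Forall_forall in F. auto.
Qed.

Lemma initial_values_bounded : forall (g : nat -> nat) N, exists c, forall j, j <= N -> g j <= c.
Proof.
  intros g N. induction N as [|N [c Hc]].
  - exists (g 0). intros j Hj. replace j with 0 by lia. lia.
  - exists (Nat.max c (g (S N))). intros j Hj.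
    destruct (Nat.eq_dec j (S N)) as [->|Hne]; [lia |]. specialize (Hc j). lia.
Qed.

Lemma finite_bounded_union : forall (P : nat -> nat -> Prop) c,
  (forall i, i <= c -> finite_nat (P i)) -> finite_nat (fun n => exists i, i <= c /\ P i n).
Proof.
  intros P c. induction c as [|c IH]; intros H.
  - destruct (H 0 (le_n 0)) as [N HN]. exists N. intros n [i [Hi Hp]].
    replace i with 0 in Hp by lia. auto.
  - destruct IH as [N1 H1]; [intros i Hi; apply H; lia |].
    destruct (H (S c) (le_n _)) as [N2 H2]. exists (N1 + N2). intros n [i [Hi Hp]].
    destruct (Nat.eq_dec i (S c)) as [->|Hne]; [specialize (H2 n Hp); lia |].
    assert (n < N1) by (apply H1; exists i; split; [lia | auto]). lia.
Qed.

Lemma first_occurrence : forall (c : nat -> nat) k,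
  exists j, j <= k /\ c j = c k /\ forall i, i < j -> c i <> c j.
Proof.
  intros c k. induction k as [k IH] using lt_wf_ind.
  destruct (classic (exists i, i < k /\ c i = c k)) as [[i [Hi Ei]] | Hnew].
  - destruct (IH i Hi) as [j [Hj [Ej Hmin]]].
    exists j. split; [lia | split; [congruence | exact Hmin]].
  - exists k. split; [lia | split; [reflexivity |]]. intros i Hi E. apply Hnew. eauto.
Qed.

Lemma ED_functional : forall A : nat * nat -> Prop,
  (forall p q q', A (p, q) -> A (p, q') -> q = q') -> ED A.
Proof.
  intros A Hfun. exists 0, [fun p => epsilon (inhabits 0) (fun q => A (p, q))].
  intros p q Hpq. right. eexists. split; [left; reflexivity |].
  apply (Hfun p); auto.
  exact (epsilon_spec (inhabits 0) (fun q => A (p, q)) (ex_intro _ q Hpq)).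
Qed.

Section KBToTallness.
Variable I : (nat -> Prop) -> Prop.
Hypothesis HI : is_ideal I.
Variable f : nat -> Delta.
Hypothesis f_finite_to_one : forall x : Delta, finite_nat (fun n => f n = x).
Hypothesis f_pullback : forall B : Delta -> Prop, ED_fin B -> I (fun n => B (f n)).

Definition column (n : nat) : nat := fst (proj1_sig (f n)).

Definition new_column (l : list nat) : bool :=
  match rev l with
  | [] => false
  | x :: r => forallb (fun y => negb (Nat.eqb (column y) (column x))) r
  end.

Lemma new_column_spec : forall s k,
  new_column (prefix s (S k)) = true <-> forall j, j < k -> column (s j) <> column (s k).
Proof.
  intros s k. unfold new_column. rewrite prefix_S, rev_app_distr. simpl.
  rewrite forallb_forall. split.
  - intros H j Hj E. assert (Hin : In (s j) (rev (prefix s k))).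
    { rewrite <- in_rev. unfold prefix. apply in_map, in_seq. lia. }
    specialize (H _ Hin). rewrite E, Nat.eqb_refl in H. discriminate.
  - intros H y Hy. rewrite <- in_rev in Hy. apply in_prefix in Hy.
    destruct Hy as [j [Hj <-]]. specialize (H j Hj).
    apply Nat.eqb_neq in H. rewrite H. reflexivity.
Qed.

(* Since f is finite-to-one and Delta has finitely many points in the
   first c + 1 columns, only finitely many n have column at most c. *)
Lemma columns_finite : forall c, finite_nat (fun n => column n <= c).
Proof.
  intros c.
  assert (H : finite_nat (fun n =>
            exists p, p <= c /\ exists q, q <= p /\ proj1_sig (f n) = (p, q))).
  { apply finite_bounded_union. intros p Hp. apply finite_bounded_union. intros q Hq.
    destruct (f_finite_to_one (exist _ (p, q) Hq)) as [N HN]. exists N. intros n Hn. apply HN.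
    destruct (f n) as [[p' q'] h]. simpl in Hn. injection Hn as -> ->.
    f_equal. apply le_unique. }
  destruct H as [N HN]. exists N. intros n Hn. apply HN. exists (column n). split; auto.
  exists (snd (proj1_sig (f n))). unfold column. destruct (f n) as [[p q] h]. simpl. auto.
Qed.

Lemma columns_unbounded : forall s, strictly_increasing s ->
  forall c N, exists k, N <= k /\ c < column (s k).
Proof.
  intros s Hs c N. destruct (columns_finite c) as [B HB]. exists (Nat.max B N).
  split; [lia |]. destruct (Nat.lt_ge_cases c (column (s (Nat.max B N)))) as [Hlt|Hge]; auto.
  specialize (HB _ Hge). pose proof (strictly_increasing_ge_id s Hs (Nat.max B N)). lia.
Qed.

Lemma new_column_answers_infinite : forall s, strictly_increasing s ->
  infinite_nat (fun m => exists k, s k = m /\ new_column (prefix s (S k)) = true).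
Proof.
  intros s Hs N. destruct (initial_values_bounded (fun j => column (s j)) N) as [c Hc].
  destruct (columns_unbounded s Hs c N) as [k [_ Hk]].
  destruct (first_occurrence (fun j => column (s j)) k) as [j [_ [Ej Hmin]]].
  assert (HjN : N < j).
  { destruct (Nat.lt_ge_cases N j) as [H|H]; auto. specialize (Hc j H). simpl in *. lia. }
  exists (s j). split; [pose proof (strictly_increasing_ge_id s Hs j); lia |].
  exists j. split; auto. apply new_column_spec. exact Hmin.
Qed.

(* The answered set has distinct columns, so its f-image is in ED and it is
   in I by the KB reduction. *)
Lemma KB_to_tallness : II_wins_tallness I new_column.
Proof.
  intros s Hs W. split; [apply new_column_answers_infinite; exact Hs |].
  set (A := fun pq : nat * nat => exists m, W m /\ proj1_sig (f m) = pq).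
  assert (Hinj : forall m m', W m -> W m' -> column m = column m' -> m = m').
  { intros m m' [k [<- Hk]] [k' [<- Hk']] E.
    rewrite new_column_spec in Hk, Hk'.
    destruct (Nat.lt_total k k') as [Hlt|[->|Hgt]]; auto.
    - exfalso. apply (Hk' k Hlt). auto.
    - exfalso. apply (Hk k' Hgt). auto. }
  assert (HA : ED A).
  { apply ED_functional. intros p q q' [m [Hm Em]] [m' [Hm' Em']].
    assert (m = m') as <-.
    { apply Hinj; auto. unfold column. rewrite Em, Em'. reflexivity. }
    rewrite Em in Em'. injection Em'. auto. }
  assert (HB : ED_fin (fun d => A (proj1_sig d))) by (exists A; split; [exact HA | tauto]).
  apply (ideal_mono I HI _ _ (f_pullback _ HB)). intros m Hm. exists m. auto.
Qed.

End KBToTallness.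

Fixpoint lists_below (n a : nat) : list (list nat) :=
  match n with
  | 0 => [[]]
  | S n' => flat_map (fun x => map (cons x) (lists_below n' a)) (seq 0 a)
  end.

Lemma lists_below_complete : forall l a,
  (forall x, In x l -> x < a) -> In l (lists_below (length l) a).
Proof.
  induction l as [|x l IH]; intros a Hl; simpl; auto.
  apply in_flat_map. exists x. split.
  - apply in_seq. specialize (Hl x (or_introl eq_refl)). lia.
  - apply in_map, IH. intros; apply Hl; simpl; auto.
Qed.

Section HMMToKB.
Variable I : (nat -> Prop) -> Prop.
Hypothesis HI : is_ideal I.
Variable sigma : hmm_strategy_I.
Hypothesis sigma_wins : I_wins_HMM I sigma.

(* A bound on every finite set [sigma] may play after a history of length at
   most a with entries below a. *)
Definition hmm_bound (a : nat) : nat :=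
  S (list_max (flat_map sigma (flat_map (fun n => lists_below n a) (seq 0 (S a))))).

Lemma hmm_bound_spec : forall a l, length l <= a -> (forall x, In x l -> x < a) ->
  forall y, In y (sigma l) -> y < hmm_bound a.
Proof.
  intros a l Hl Hx y Hy. unfold hmm_bound. apply Nat.lt_succ_r, list_max_upper.
  apply in_flat_map. exists l. split; auto. apply in_flat_map.
  exists (length l). split; [apply in_seq; lia | apply lists_below_complete; auto].
Qed.

Fixpoint milestone (i : nat) : nat :=
  match i with
  | 0 => 0
  | S i' => Nat.max (S (milestone i')) (hmm_bound (milestone i'))
  end.

Lemma milestone_lt_S : forall i, milestone i < milestone (S i).
Proof. intros. cbn [milestone]. lia. Qed.

Lemma milestone_bound : forall i, hmm_bound (milestone i) <= milestone (S i).
Proof. intros. cbn [milestone]. lia. Qed.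

Lemma milestone_mono : forall i j, i <= j -> milestone i <= milestone j.
Proof. intros i j H. induction H; [lia |]. pose proof (milestone_lt_S m). lia. Qed.

Lemma milestone_ge_id : forall i, i <= milestone i.
Proof. induction i; [simpl; lia |]. pose proof (milestone_lt_S i). lia. Qed.

(* [block n] is the index i of the block [milestone i, milestone (i+1)) containing n. *)
Fixpoint block (n : nat) : nat :=
  match n with
  | 0 => 0
  | S n' => if milestone (S (block n')) <=? S n' then S (block n') else block n'
  end.

Lemma block_spec : forall n, milestone (block n) <= n < milestone (S (block n)).
Proof.
  induction n as [|n IH].
  - split; [simpl; lia | exact (milestone_lt_S 0)].
  - cbn [block]. destruct (Nat.leb_spec (milestone (S (block n))) (S n)).
    + pose proof (milestone_lt_S (S (block n))). lia.
    + lia.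
Qed.

Definition ed_reduction (n : nat) : Delta :=
  exist (fun p : nat * nat => snd p <= fst p) (milestone (S (block n)), n)
        (Nat.lt_le_incl _ _ (proj2 (block_spec n))).

(* A play using block 2k+e+1 at round k: the value of g at the column of that
   block if it falls in the block, and the block's left end otherwise. *)
Definition block_play (e : nat) (g : nat -> nat) (k : nat) : nat :=
  let v := g (milestone (2 * k + e + 2)) in
  if (milestone (2 * k + e + 1) <=? v) && (v <? milestone (2 * k + e + 2))
  then v else milestone (2 * k + e + 1).

Lemma block_play_bounds : forall e g k,
  milestone (2 * k + e + 1) <= block_play e g k < milestone (2 * k + e + 2).
Proof.
  intros. unfold block_play. pose proof (milestone_lt_S (2 * k + e + 1)).
  replace (S (2 * k + e + 1)) with (2 * k + e + 2) in * by lia.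
  destruct (Nat.leb_spec (milestone (2 * k + e + 1)) (g (milestone (2 * k + e + 2)))); cbn [andb].
  - destruct (Nat.ltb_spec (g (milestone (2 * k + e + 2))) (milestone (2 * k + e + 2))); lia.
  - lia.
Qed.

(* Earlier moves lie below milestone (2k+e), so the move in block 2k+e+1
   avoids the set forbidden by [sigma]: each block play is legal. *)
Lemma block_play_legal : forall e g k, ~ In (block_play e g k) (sigma (prefix (block_play e g) k)).
Proof.
  intros e g k Hin.
  assert (H : block_play e g k < hmm_bound (milestone (2 * k + e))).
  { apply (hmm_bound_spec _ (prefix (block_play e g) k)); auto.
    - rewrite prefix_length. pose proof (milestone_ge_id (2 * k + e)). lia.
    - intros x Hx. apply in_prefix in Hx. destruct Hx as [j [Hj <-]].
      pose proof (block_play_bounds e g j).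
      pose proof (milestone_mono (2 * j + e + 2) (2 * k + e)). lia. }
  pose proof (milestone_bound (2 * k + e)). pose proof (block_play_bounds e g k).
  replace (S (2 * k + e)) with (2 * k + e + 1) in * by lia. lia.
Qed.

Definition graph_trace (g : nat -> nat) (n : nat) : Prop :=
  (exists k, block_play 0 g k = n) \/ (exists k, block_play 1 g k = n).

(* Block plays are won by Player I, so finitely many graph traces form a set in I. *)
Lemma graph_traces_small : forall fs, I (fun n => exists g, In g fs /\ graph_trace g n).
Proof.
  induction fs as [|g fs IH].
  - apply (ideal_finite I HI). exists 0. intros n [g [[] _]].
  - assert (Hg : I (graph_trace g)).
    { apply (ideal_union I HI); apply sigma_wins, block_play_legal. }
    apply (ideal_mono I HI _ _ (ideal_union I HI _ _ Hg IH)).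
    intros n [g' [[<-|Hg'] HQ]]; [left; exact HQ | right; eauto].
Qed.

Lemma block_play_hits : forall g n i, block n = S i -> g (milestone (S (S i))) = n ->
  graph_trace g n.
Proof.
  intros g n i Hb Eg. pose proof (block_spec n) as Hn. rewrite Hb in Hn.
  assert (Hplay : forall e k, 2 * k + e = i -> block_play e g k = n).
  { intros e k <-. unfold block_play.
    replace (2 * k + e + 2) with (S (S (2 * k + e))) by lia.
    replace (2 * k + e + 1) with (S (2 * k + e)) by lia. rewrite Eg.
    destruct (Nat.leb_spec (milestone (S (2 * k + e))) n); [| lia].
    destruct (Nat.ltb_spec n (milestone (S (S (2 * k + e))))); [reflexivity | lia]. }
  destruct (Nat.Even_or_Odd i) as [[k Hk]|[k Hk]].
  - left. exists k. apply Hplay. lia.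
  - right. exists k. apply Hplay. lia.
Qed.

(* Preimages of vertical lines are finite, and preimages of graphs are covered
   by graph traces. *)
Lemma HMM_to_KB : KB_le ED_fin I.
Proof.
  exists ed_reduction. split.
  - intros x. exists (S (snd (proj1_sig x))). intros n <-. simpl. lia.
  - intros B [A [[N [fs HA]] HB]].
    set (M := Nat.max N (milestone 1)).
    assert (Hsmall : I (fun n => n < M)) by (apply (ideal_finite I HI); exists M; auto).
    apply (ideal_mono I HI _ _ (ideal_union I HI _ _ Hsmall (graph_traces_small fs))).
    intros n Hn. apply HB in Hn. change (A (milestone (S (block n)), n)) in Hn.
    pose proof (block_spec n) as Hbn.
    destruct (HA _ _ Hn) as [Hlt | [g [Hg Eg]]]; [left; lia |].
    destruct (block n) as [|i] eqn:Ei; [left; lia |].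
    right. exists g. split; auto. apply (block_play_hits g n i Ei). auto.
Qed.

End HMMToKB.

(* [increasing_from b l]: l is strictly increasing with entries >= b;
   [next_bound b l] is the lower bound for a continuation of l. *)
Fixpoint next_bound (b : nat) (l : list nat) : nat :=
  match l with [] => b | x :: r => next_bound (S x) r end.

Fixpoint increasing_from (b : nat) (l : list nat) : Prop :=
  match l with [] => True | x :: r => b <= x /\ increasing_from (S x) r end.

Lemma increasing_from_app : forall l1 b l2,
  increasing_from b (l1 ++ l2) <-> increasing_from b l1 /\ increasing_from (next_bound b l1) l2.
Proof. induction l1; intros; simpl; [tauto |]. rewrite IHl1. tauto. Qed.

Lemma increasing_from_ge : forall l b x, increasing_from b l -> In x l -> b <= x.
Proof.
  induction l as [|y l IH]; intros b x H Hx; simpl in *; [contradiction |].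
  destruct H as [H1 H2]. destruct Hx as [<-|Hx]; auto. specialize (IH _ _ H2 Hx). lia.
Qed.

Lemma increasing_from_nth : forall l b i j, increasing_from b l -> i < j < length l ->
  nth i l 0 < nth j l 0.
Proof.
  induction l as [|x l IH]; intros b i j H Hij; simpl in *; [lia |].
  destruct H as [H1 H2]. destruct j; [lia |]. destruct i.
  - assert (In (nth j l 0) l) by (apply nth_In; lia).
    pose proof (increasing_from_ge _ _ _ H2 H). lia.
  - apply (IH (S x)); auto; lia.
Qed.

Lemma increasing_from_map_seq : forall (y : nat -> nat), strictly_increasing y ->
  forall i j b, b <= y j -> increasing_from b (map y (seq j i)).
Proof.
  intros y Hy. induction i as [|i IH]; intros j b Hb; simpl; auto.
  split; auto. apply IH. apply Hy.
Qed.

Definition splice (h : list nat) (y : nat -> nat) (k : nat) : nat :=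
  if k <? length h then nth k h 0 else y (k - length h).

Lemma prefix_splice : forall h y i, prefix (splice h y) (length h + i) = h ++ map y (seq 0 i).
Proof.
  intros h y. induction i as [|i IH].
  - rewrite Nat.add_0_r, app_nil_r. apply (nth_ext _ _ 0 0); rewrite prefix_length; auto.
    intros n Hn. rewrite prefix_nth; auto. unfold splice.
    destruct (Nat.ltb_spec n (length h)); auto; lia.
  - rewrite Nat.add_succ_r, prefix_S, IH, seq_S, map_app, app_assoc. simpl.
    unfold splice. destruct (Nat.ltb_spec (length h + i) (length h)); [lia |].
    do 3 f_equal. lia.
Qed.

Lemma splice_increasing : forall h y, increasing_from 0 h -> next_bound 0 h <= y 0 ->
  strictly_increasing y -> strictly_increasing (splice h y).
Proof.
  intros h y Hh Hy0 Hy k.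
  assert (Hpre : increasing_from 0 (prefix (splice h y) (length h + S (S k)))).
  { rewrite prefix_splice. apply increasing_from_app.
    split; auto. apply increasing_from_map_seq; auto. }
  rewrite <- (prefix_nth (splice h y) (length h + S (S k)) k 0) by lia.
  rewrite <- (prefix_nth (splice h y) (length h + S (S k)) (S k) 0) by lia.
  apply (increasing_from_nth _ 0); auto. rewrite prefix_length. lia.
Qed.

Lemma unbounded_increasing_sequence : forall (P : nat -> Prop) b,
  (forall N, exists x, N <= x /\ P x) ->
  exists y : nat -> nat, b <= y 0 /\ strictly_increasing y /\ forall i, P (y i).
Proof.
  intros P b HP.
  set (next := fun N => epsilon (inhabits 0) (fun x => N <= x /\ P x)).
  assert (Hnext : forall N, N <= next N /\ P (next N))
    by (intros N; apply (epsilon_spec (inhabits 0) (fun x => N <= x /\ P x)), HP).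
  exists (fix y i := match i with 0 => next b | S i' => next (S (y i')) end).
  split; [apply Hnext | split].
  - intros i. apply Hnext.
  - intros [|i]; apply Hnext.
Qed.

Section ChainLimit.
Variable hist : nat -> list nat.
Hypothesis hist_extends : forall k, exists r, hist (S k) = hist k ++ r.
Hypothesis hist_grows : forall k, k <= length (hist k).

Definition chain_limit (n : nat) : nat := nth n (hist (S n)) 0.

Lemma hist_mono : forall k k', k <= k' -> exists r, hist k' = hist k ++ r.
Proof.
  intros k k' H. induction H as [|m H IH]; [exists []; rewrite app_nil_r; auto |].
  destruct IH as [r Hr]. destruct (hist_extends m) as [r' Hr'].
  exists (r ++ r'). rewrite Hr', Hr, app_assoc. reflexivity.
Qed.

Lemma chain_limit_nth : forall K n, n < length (hist K) -> chain_limit n = nth n (hist K) 0.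
Proof.
  intros K n Hn. unfold chain_limit. destruct (Nat.le_ge_cases K (S n)) as [H|H].
  - destruct (hist_mono _ _ H) as [r ->]. rewrite app_nth1; [reflexivity | exact Hn].
  - destruct (hist_mono _ _ H) as [r ->]. rewrite app_nth1; [reflexivity |].
    specialize (hist_grows (S n)). lia.
Qed.

Lemma chain_limit_prefix : forall K m, m <= length (hist K) ->
  prefix chain_limit m = firstn m (hist K).
Proof.
  intros K m Hm. apply (nth_ext _ _ 0 0).
  - rewrite prefix_length, firstn_length_le; auto.
  - intros n Hn. rewrite prefix_length in Hn. rewrite prefix_nth, nth_firstn; auto.
    destruct (Nat.ltb_spec n m); [| lia]. apply chain_limit_nth. lia.
Qed.

End ChainLimit.

Section TallnessToHMM.
Variable I : (nat -> Prop) -> Prop.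
Hypothesis HI : is_ideal I.
Variable tau : tall_strategy_II.
Hypothesis tau_wins : II_wins_tallness I tau.

(* From the virtual tallness play h, Player I can reach x (after some filler
   moves J) so that [tau] answers 1 at x. *)
Definition extendable (h : list nat) (x : nat) : Prop :=
  exists J, increasing_from (next_bound 0 h) (J ++ [x]) /\ tau (h ++ J ++ [x]) = true.

(* All large x are extendable: otherwise the non-extendable moves, played
   after h, would give a play in which [tau] answers 1 only finitely often. *)
Lemma extendable_cofinite : forall h, increasing_from 0 h ->
  exists N, forall x, N <= x -> extendable h x.
Proof.
  intros h Hh. apply NNPP. intros Hfew.
  assert (Hbad : forall N, exists x, N <= x /\ ~ extendable h x).
  { intros N. apply NNPP. intros Hno. apply Hfew. exists N. intros x Hx.
    apply NNPP. intros Hnx. apply Hno. eauto. }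
  destruct (unbounded_increasing_sequence _ (next_bound 0 h) Hbad) as [y [Hy0 [Hy Hyb]]].
  destruct (tau_wins (splice h y) (splice_increasing h y Hh Hy0 Hy)) as [Hinf _].
  destruct (Hinf (S (list_max h))) as [m [Hm [k [Hk Ht]]]].
  destruct (Nat.lt_ge_cases k (length h)) as [Hlt|Hge].
  - unfold splice in Hk. destruct (Nat.ltb_spec k (length h)) as [_|]; [| lia].
    assert (In m h) by (rewrite <- Hk; apply nth_In; auto).
    pose proof (list_max_upper _ _ H). lia.
  - set (i := k - length h).
    replace (S k) with (length h + S i) in Ht by lia.
    rewrite prefix_splice, seq_S, map_app in Ht.
    apply (Hyb i). exists (map y (seq 0 i)). split; [| exact Ht].
    change [y i] with (map y [0 + i]). rewrite <- map_app, <- seq_S.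
    apply increasing_from_map_seq; auto.
Qed.

(* Player I's strategy: forbid the non-extendable moves below [safe_bound h],
   and record each answer x of Player II by extending h with filler moves and x. *)
Definition safe_bound (h : list nat) : nat :=
  epsilon (inhabits 0) (fun N => forall x, N <= x -> extendable h x).

Definition filler (h : list nat) (x : nat) : list nat :=
  epsilon (inhabits []) (fun J => increasing_from (next_bound 0 h) (J ++ [x]) /\
                                  tau (h ++ J ++ [x]) = true).

Definition advance (h : list nat) (x : nat) : list nat := h ++ filler h x ++ [x].

Definition history (l : list nat) : list nat := fold_left advance l [].

Definition hmm_from_tallness (l : list nat) : list nat := seq 0 (safe_bound (history l)).

Lemma filler_spec : forall h x, increasing_from 0 h -> safe_bound h <= x ->
  increasing_from (next_bound 0 h) (filler h x ++ [x]) /\ tau (h ++ filler h x ++ [x]) = true.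
Proof.
  intros h x Hh Hx. unfold filler. apply epsilon_spec.
  apply (epsilon_spec (inhabits 0) (fun N => forall x, N <= x -> extendable h x)); auto.
  apply extendable_cofinite; auto.
Qed.

(* The virtual plays converge to a tallness play in which [tau] answers 1 at
   every move of Player II; its answered set is in I. *)
Lemma tallness_to_HMM : I_wins_HMM I hmm_from_tallness.
Proof.
  intros s Hs.
  set (hist := fun k => history (prefix s k)).
  assert (hist_S : forall k, hist (S k) = advance (hist k) (s k))
    by (intros k; unfold hist, history; rewrite prefix_S, fold_left_app; reflexivity).
  assert (Hsafe : forall k, safe_bound (hist k) <= s k).
  { intros k. destruct (Nat.lt_ge_cases (s k) (safe_bound (hist k))); auto.
    exfalso. apply (Hs k), in_seq. unfold hist in *. lia. }
  assert (Hinc : forall k, increasing_from 0 (hist k)).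
  { induction k; [constructor |]. rewrite hist_S. apply increasing_from_app.
    split; auto. apply filler_spec; auto. }
  assert (Hext : forall k, exists r, hist (S k) = hist k ++ r)
    by (intros k; rewrite hist_S; eexists; reflexivity).
  assert (Hgrow : forall k, k <= length (hist k)).
  { induction k; [lia |]. rewrite hist_S. unfold advance. rewrite !length_app. simpl. lia. }
  set (t := chain_limit hist).
  assert (Ht : strictly_increasing t).
  { intros n. specialize (Hgrow (S (S n))) as Hlen. unfold t.
    rewrite !(chain_limit_nth hist Hext Hgrow (S (S n))) by lia.
    apply (increasing_from_nth _ 0); [apply Hinc | lia]. }
  destruct (tau_wins t Ht) as [_ HW].
  apply (ideal_mono I HI _ _ HW). intros m [k <-].
  set (L := length (hist k ++ filler (hist k) (s k))).
  assert (Eh : hist (S k) = (hist k ++ filler (hist k) (s k)) ++ [s k])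
    by (rewrite hist_S; unfold advance; rewrite app_assoc; reflexivity).
  assert (HL : length (hist (S k)) = S L) by (rewrite Eh, length_app; simpl; lia).
  exists L. split.
  - unfold t. rewrite (chain_limit_nth hist Hext Hgrow (S k)) by lia.
    rewrite Eh, app_nth2, Nat.sub_diag by lia. reflexivity.
  - unfold t. rewrite (chain_limit_prefix hist Hext Hgrow (S k)), firstn_all2 by lia.
    rewrite hist_S. apply filler_spec; auto.
Qed.

End TallnessToHMM.

Theorem mainTheorem13 (I : (nat -> Prop) -> Prop) (HI : is_ideal I) :
  ((exists sigma : hmm_strategy_I, I_wins_HMM I sigma) <->
   (exists sigma : tall_strategy_II, II_wins_tallness I sigma)) /\
  ((exists sigma : tall_strategy_II, II_wins_tallness I sigma) <->
   KB_le ED_fin I).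
Proof.
  assert (H13 : (exists sigma, I_wins_HMM I sigma) -> KB_le ED_fin I)
    by (intros [sigma Hsigma]; exact (HMM_to_KB I HI sigma Hsigma)).
  assert (H32 : KB_le ED_fin I -> exists sigma, II_wins_tallness I sigma)
    by (intros [f [Hf Hpull]]; exists (new_column f); exact (KB_to_tallness I HI f Hf Hpull)).
  assert (H21 : (exists sigma, II_wins_tallness I sigma) -> exists sigma, I_wins_HMM I sigma)
    by (intros [tau Htau]; exists (hmm_from_tallness tau); exact (tallness_to_HMM I HI tau Htau)).
  split; split; auto.
Qed.
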